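(* Let $f(\bm\theta)=g_i(\theta_i;\bar{\bm\theta}_i)-h_i(\theta_i;\bar{\bm\theta}_i)$ for each block $i$, with $g_i(\cdot;\bar{\bm\theta}_i)$ convex and differentiable and $h_i(\cdot;\bar{\bm\theta}_i)$ convex in $\theta_i$. Let $\rho>0$, let $\bm\theta^k$ be any point, $i_k$ a block, $u^k_{i_k}\in\partial_{i_k}h_{i_k}(\theta^k_{i_k};\bar{\bm\theta}^k_{i_k})$, and let $\bm\theta^{k+1}$ agree with $\bm\theta^k$ outside block $i_k$ and have $\theta^{k+1}_{i_k}\in\arg\min_{\theta_{i_k}\in\mathcal X_{i_k}}g_{i_k}(\theta_{i_k};\bar{\bm\theta}^k_{i_k})-\langle u^k_{i_k},\theta_{i_k}\rangle+\frac\rho2\|\theta^k_{i_k}-\theta_{i_k}\|^2$. Then $\bm\theta^{k+1}\in\mathcal B\big(\bm\theta^k,\frac2\rho\|\nabla g_{i_k}(\theta^k_{i_k};\bar{\bm\theta}^k_{i_k})-u^k_{i_k}\|\big)$, i.e. $\|\bm\theta^{k+1}-\bm\theta^k\|\le\frac2\rho\|\nabla g_{i_k}(\theta^k_{i_k};\bar{\bm\theta}^k_{i_k})-u^k_{i_k}\|$.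
   Context: $\theta_i$ is the $i$th block of $\bm\theta\in\mathcal X=\mathcal X_1\times\cdots\times\mathcal X_n$ and $\bar{\bm\theta}_i$ is $\bm\theta$ with its $i$th block set to zero; $\nabla g_{i}$ denotes the gradient with respect to block $i$ and $\partial_i$ the convex subdifferential with respect to block $i$; $\mathcal B(c,r)$ is the closed ball of radius $r$ centred at $c$. *)

From HB Require Import structures.
From mathcomp Require Import all_boot all_order all_algebra.
From mathcomp Require Import all_classical all_reals all_analysis.
Set Implicit Arguments. Unset Strict Implicit. Unset Printing Implicit Defensive.
Import Order.TTheory GRing.Theory Num.Theory.
Import numFieldNormedType.Exports.
Local Open Scope ring_scope.

Definition dotv (R : realType) (m : nat) (u v : 'rV[R]_m) : R :=
  \sum_(j < m) u 0 j * v 0 j.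
Definition enorm (R : realType) (m : nat) (u : 'rV[R]_m) : R :=
  Num.sqrt (dotv u u).

Definition bspace (R : realType) (n : nat) (d : 'I_n -> nat) : Type :=
  forall i : 'I_n, 'rV[R]_(d i).

Definition bnorm (R : realType) (n : nat) (d : 'I_n -> nat) (x : bspace R d) : R :=
  Num.sqrt (\sum_(i < n) dotv (x i) (x i)).

Definition bsub (R : realType) (n : nat) (d : 'I_n -> nat) (x y : bspace R d)
  : bspace R d := fun j => x j - y j.

(* \bar theta_i : theta with its i-th block set to zero *)
Definition zero_block (R : realType) (n : nat) (d : 'I_n -> nat) (i : 'I_n)
  (x : bspace R d) : bspace R d := fun j => if j == i then 0 else x j.

Definition convex_fun (R : realType) (m : nat) (f : 'rV[R]_m -> R) : Prop :=
  forall (x y : 'rV[R]_m) (t : R), 0 <= t -> t <= 1 ->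
    f (t *: x + (1 - t) *: y) <= t * f x + (1 - t) * f y.

Definition is_subgrad (R : realType) (m : nat) (f : 'rV[R]_m -> R) (x u : 'rV[R]_m)
  : Prop := forall y, f x + dotv u (y - x) <= f y.

Definition grad (R : realType) (m : nat) (f : 'rV[R]_m -> R) (x : 'rV[R]_m)
  : 'rV[R]_m := \row_(j < m) ('D_(delta_mx 0 j) f x).

(** Comparing the proximal objective at the new block [x1] with its value at
    the old block [x], and adding the gradient inequality
    [G x + <grad G x, x1 - x> <= G x1] of the convex block function [G], gives
    [<grad G x - u, x1 - x> + rho/2 |x1 - x|^2 <= 0]; Cauchy-Schwarz turns this
    into [rho/2 |x1 - x| <= |grad G x - u|].  Only block [ik] moves, so
    [|x1 - x|] is the distance in the product space. *)

From HB Require Import structures.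
From mathcomp Require Import all_boot all_order all_algebra.
From mathcomp Require Import all_classical all_reals all_analysis.
From mathcomp Require Import ring lra.

Set Implicit Arguments.
Unset Strict Implicit.
Unset Printing Implicit Defensive.
Import Order.TTheory GRing.Theory Num.Theory.
Import numFieldNormedType.Exports.
Local Open Scope ring_scope.

Section EuclideanRow.
Variables (R : realType) (m : nat).
Implicit Types (a b c : 'rV[R]_m) (k : R).

Lemma dotvC a b : dotv a b = dotv b a.
Proof. by apply: eq_bigr => j _; rewrite mulrC. Qed.

Lemma dotvDl a b c : dotv (a + b) c = dotv a c + dotv b c.
Proof.
by rewrite /dotv -big_split; apply: eq_bigr => j _; rewrite mxE mulrDl.
Qed.

Lemma dotvZl k a b : dotv (k *: a) b = k * dotv a b.
Proof.
by rewrite /dotv mulr_sumr; apply: eq_bigr => j _; rewrite mxE mulrA.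
Qed.

Lemma dotvNl a b : dotv (- a) b = - dotv a b.
Proof. by rewrite -scaleN1r dotvZl mulN1r. Qed.

Lemma dotvBl a b c : dotv (a - b) c = dotv a c - dotv b c.
Proof. by rewrite dotvDl dotvNl. Qed.

Lemma dotvDr a b c : dotv a (b + c) = dotv a b + dotv a c.
Proof. by rewrite dotvC dotvDl !(dotvC a). Qed.

Lemma dotvZr k a b : dotv a (k *: b) = k * dotv a b.
Proof. by rewrite dotvC dotvZl dotvC. Qed.

Lemma dotvBr a b c : dotv a (b - c) = dotv a b - dotv a c.
Proof. by rewrite dotvC dotvBl !(dotvC a). Qed.

Lemma dotvv_ge0 a : 0 <= dotv a a.
Proof. by apply: sumr_ge0 => j _; rewrite -expr2 sqr_ge0. Qed.

Lemma enorm_ge0 a : 0 <= enorm a.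
Proof. exact: sqrtr_ge0. Qed.

Lemma enorm_sqr a : enorm a ^+ 2 = dotv a a.
Proof. by rewrite sqr_sqrtr // dotvv_ge0. Qed.

Lemma enorm0 : enorm (0 : 'rV[R]_m) = 0.
Proof. by rewrite /enorm /dotv big1 ?sqrtr0 // => j _; rewrite mxE mul0r. Qed.

Lemma enormN a : enorm (- a) = enorm a.
Proof. by rewrite /enorm dotvNl dotvC dotvNl opprK. Qed.

(* Expanding [0 <= |a + k b|^2] is Cauchy-Schwarz in the form needed here. *)
Lemma enorm_le_of_dotv_le k a b :
  0 < k -> dotv a b + k * enorm b ^+ 2 <= 0 -> k * enorm b <= enorm a.
Proof.
move=> k0; rewrite enorm_sqr => hab.
have expand : dotv (a + k *: b) (a + k *: b)
    = dotv a a + 2 * k * dotv a b + k ^+ 2 * dotv b b.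
  by rewrite dotvDl !dotvDr !dotvZl !dotvZr (dotvC b a); ring.
have := dotvv_ge0 (a + k *: b); rewrite expand => sqr_ge0.
have descent : 0 <= k * - (dotv a b + k * dotv b b).
  by apply: mulr_ge0; [exact: ltW | lra].
rewrite -ler_sqr ?nnegrE; last 2 first.
- by rewrite mulr_ge0 ?enorm_ge0 ?ltW.
- exact: enorm_ge0.
rewrite exprMn !enorm_sqr; nra.
Qed.

End EuclideanRow.

Lemma dotv_grad (R : realType) m (F : 'rV[R]_m -> R) x v :
  differentiable F x -> dotv (grad F x) v = 'D_v F x.
Proof.
move=> dF; rewrite deriveE // {2}(row_sum_delta v) linear_sum.
by apply: eq_bigr => j _; rewrite mxE deriveE // linearZ /= mulrC.
Qed.

(* The difference quotient of a convex function over [[x, x + v]] is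
   nondecreasing in the step, so its limit at [0+] is below its value at 1. *)
Lemma derive_le_convex (R : realType) m (F : 'rV[R]_m -> R) x v :
  convex_fun F -> derivable F x v -> 'D_v F x <= F (x + v) - F x.
Proof.
move=> cF /cvg_dnbhs_at_right cvgF; apply: (cvgr_to_le cvgF); near=> t.
have t0 : 0 < t by near: t; exact: nbhs_right_gt.
have t1 : t < 1 by near: t; exact: nbhs_right_lt.
have := cF (x + v) x t (ltW t0) (ltW t1).
have -> : t *: (x + v) + (1 - t) *: x = t *: v + x.
  by rewrite scalerDr scalerBl scale1r [LHS]addrC addrA subrK addrC.
rewrite /= ler_pdivrMl // => H; lra.
Unshelve. all: by end_near.
Qed.

Lemma convex_grad_ineq (R : realType) m (F : 'rV[R]_m -> R) x y :
  convex_fun F -> differentiable F x -> F x + dotv (grad F x) (y - x) <= F y.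
Proof.
move=> cF dF; rewrite dotv_grad //.
have := derive_le_convex (v := y - x) cF (diff_derivable dF).
rewrite [x + _]addrC subrK; lra.
Qed.

Lemma proximal_step_le (R : realType) m (G : 'rV[R]_m -> R)
    (u x x1 : 'rV[R]_m) k :
  convex_fun G -> differentiable G x -> 0 < k ->
  G x1 - dotv u x1 + k * enorm (x - x1) ^+ 2 <= G x - dotv u x ->
  k * enorm (x1 - x) <= enorm (grad G x - u).
Proof.
move=> cG dG k0 hstep; apply: enorm_le_of_dotv_le => //.
have := convex_grad_ineq x1 cG dG.
move: hstep; rewrite -enormN opprB dotvBl !dotvBr; lra.
Qed.

Lemma bnorm_bsub_block (R : realType) n (d : 'I_n -> nat) (x y : bspace R d) i :
  (forall j, j != i -> y j = x j) -> bnorm (bsub y x) = enorm (y i - x i).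
Proof.
move=> yx; rewrite /bnorm (bigD1 i) //= big1 ?addr0 // => j /yx yxj.
by rewrite /bsub yxj subrr /dotv big1 // => l _; rewrite mxE mul0r.
Qed.

Theorem lemmaA3 (R : realType) (n : nat) (d : 'I_n -> nat)
  (f : bspace R d -> R)
  (g h : forall i : 'I_n, 'rV[R]_(d i) -> bspace R d -> R)
  (hf : forall (i : 'I_n) (th : bspace R d),
      f th = g i (th i) (zero_block i th) - h i (th i) (zero_block i th))
  (hgcvx : forall (i : 'I_n) (thb : bspace R d), convex_fun (g i ^~ thb))
  (hgdiff : forall (i : 'I_n) (thb : bspace R d) (x : 'rV[R]_(d i)),
      differentiable (g i ^~ thb) x)
  (hhcvx : forall (i : 'I_n) (thb : bspace R d), convex_fun (h i ^~ thb))
  (rho : R) (hrho : 0 < rho)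
  (thk thk1 : bspace R d) (ik : 'I_n) (u : 'rV[R]_(d ik))
  (hu : is_subgrad (h ik ^~ (zero_block ik thk)) (thk ik) u)
  (hagree : forall j : 'I_n, j != ik -> thk1 j = thk j)
  (hmin : forall y : 'rV[R]_(d ik),
      g ik (thk1 ik) (zero_block ik thk) - dotv u (thk1 ik)
        + rho / 2 * (enorm (thk ik - thk1 ik)) ^+ 2
      <= g ik y (zero_block ik thk) - dotv u y
        + rho / 2 * (enorm (thk ik - y)) ^+ 2) :
  bnorm (bsub thk1 thk)
    <= 2 / rho * enorm (grad (g ik ^~ (zero_block ik thk)) (thk ik) - u).
Proof.
have half_rho_gt0 : 0 < rho / 2 by rewrite divr_gt0.
have no_worse_than_stay := hmin (thk ik).
rewrite subrr enorm0 expr0n mulr0 addr0 in no_worse_than_stay.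
have step := proximal_step_le (hgcvx ik _) (hgdiff ik _ _) half_rho_gt0
  no_worse_than_stay.
rewrite (bnorm_bsub_block hagree) -(ler_pM2l half_rho_gt0) mulrA.
by rewrite (_ : rho / 2 * (2 / rho) = 1) ?mul1r //; field; rewrite gt_eqF.
Qed.
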